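(* A formal power series $\varphi(x)\in\mathbb{C}[[x]]$ is symplectic if and only if there exists a formal power series $\rho(y)\in\mathbb{C}[[y]]$ such that $\varphi(x)=\rho\big(x^2/(1-x)\big)$ (formal composition).
   Context: A formal power series $\varphi(x)=\sum_{i\ge0}\gamma_i x^i\in\mathbb{C}[[x]]$ is called symplectic if for every $m\ge1$ one has $\sum_{k=0}^{m-1}(-1)^k\binom{m-1}{k}\gamma_{m+k}=0$. Here $x^2/(1-x)=\sum_{j\ge2}x^j$ has zero constant term, so the composite is a well-defined formal power series. *)

From mathcomp Require Import all_boot all_order all_algebra.
From mathcomp Require Import complex.
From mathcomp Require Import Rstruct.
Set Implicit Arguments. Unset Strict Implicit. Unset Printing Implicit Defensive.
Import Order.TTheory GRing.Theory Num.Theory.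
Local Open Scope ring_scope.

Definition C : Type := complex Rdefinitions.RbaseSymbolsImpl.R.

Definition fps := nat -> C.

Definition fps_mul (f g : fps) : fps :=
  fun m => \sum_(i < m.+1) f i * g (m - i)%N.

Definition fps_one : fps := fun m => if m == 0%N then 1 else 0.

Fixpoint fps_pow (f : fps) (n : nat) : fps :=
  match n with
  | 0 => fps_one
  | n'.+1 => fps_mul f (fps_pow f n')
  end.

(* Formal composition rho(u) = sum_n rho_n u^n, for u with zero constant term
   (then u^n has no coefficient of x^m for n > m, so the sum is finite). *)
Definition fps_comp (rho u : fps) : fps :=
  fun m => \sum_(n < m.+1) rho n * fps_pow u n m.

(* The series x^2/(1-x) = sum_{j>=2} x^j. *)
Definition x2_over_1mx : fps := fun j => if (2 <= j)%N then 1 else 0.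

Definition symplectic (phi : fps) : Prop :=
  forall m : nat, (1 <= m)%N ->
    \sum_(k < m) (-1) ^+ k * ('C(m.-1, k))%:R * phi (m + k)%N = 0 :> C.

(* Write u = x^2/(1-x). The coefficient of x^j in u^(r+1) is the binomial
   C(j-r-2, r), a polynomial of degree r in j, so its N-th finite differences
   vanish for N > r: every power of u, hence every composite rho(u), is
   symplectic. Conversely the m-th symplectic condition determines the
   coefficient of x^(2m-1) from the following ones, so a symplectic series is
   determined by its even coefficients; since u^n starts with x^(2n), the even
   coefficients of phi can be matched by rho(u) by solving a unitriangular
   system for the coefficients of rho. *)
From HB Require Import structures.
From mathcomp Require Import all_boot all_order all_algebra.
From mathcomp Require Import zify complex Rstruct.
From Stdlib Require Import FunctionalExtensionality.
Set Implicit Arguments. Unset Strict Implicit. Unset Printing Implicit Defensive.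
Import Order.TTheory GRing.Theory Num.Theory.
Local Open Scope ring_scope.

HB.instance Definition _ := GRing.Field.copy C (complex Rdefinitions.RbaseSymbolsImpl.R).

Lemma sum_ord_trunc (V : nmodType) (F : nat -> V) a c : (a <= c)%N ->
  (forall i, (a <= i < c)%N -> F i = 0) ->
  \sum_(i < c) F i = \sum_(i < a) F i.
Proof.
move=> le_ac F0; rewrite (big_ord_widen _ _ le_ac) [RHS]big_mkcond /=.
apply: eq_bigr => i _; case: ifP => // /negbT; rewrite -leqNgt => le_ai.
by rewrite F0 // le_ai /=.
Qed.

Section FiniteDifference.
Variable R : pzRingType.

(* Up to the sign (-1)^N, the N-th forward difference of f at 0. *)
Definition fdiff (N : nat) (f : nat -> R) : R :=
  \sum_(k < N.+1) (-1) ^+ k * ('C(N, k))%:R * f k.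

Lemma eq_fdiff N f g : f =1 g -> fdiff N f = fdiff N g.
Proof. by move=> fg; apply: eq_bigr => i _; rewrite fg. Qed.

Lemma fdiffB N f g : fdiff N (fun k => f k - g k) = fdiff N f - fdiff N g.
Proof. by rewrite /fdiff -sumrB; apply: eq_bigr => i _; rewrite mulrBr. Qed.

Lemma fdiffN N f : fdiff N (fun k => - f k) = - fdiff N f.
Proof. by rewrite /fdiff -sumrN; apply: eq_bigr => i _; rewrite mulrN. Qed.

Lemma fdiffS N f : fdiff N.+1 f = fdiff N f - fdiff N (fun k => f k.+1).
Proof.
have shifted : \sum_(i < N.+1) (-1) ^+ i.+1 * ('C(N.+1, i.+1))%:R * f i.+1 =
    \sum_(i < N) (-1) ^+ i.+1 * ('C(N, i.+1))%:R * f i.+1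
    - fdiff N (fun k => f k.+1).
  rewrite /fdiff -sumrN.
  under eq_bigr => i _ do rewrite binS natrD mulrDr mulrDl.
  rewrite big_split /= big_ord_recr /= bin_small // mulr0 mul0r addr0.
  by congr (_ + _); apply: eq_bigr => i _; rewrite exprS mulN1r !mulNr.
rewrite /fdiff big_ord_recl /= shifted [in RHS]big_ord_recl /= addrA !bin0.
by congr (_ + _ - _); apply: eq_bigr => i _; rewrite /bump leq0n add1n.
Qed.

Lemma fdiff_binomial N r c : (r < N)%N -> fdiff N (fun k => ('C(c + k, r))%:R) = 0.
Proof.
elim: N r c => [//|N IH] [|r] c lt_rN; rewrite fdiffS -fdiffB.
  by rewrite /fdiff big1 // => i _; rewrite !bin0 subrr mulr0.
rewrite (@eq_fdiff _ _ (fun k => - ('C(c + k, r))%:R)); first by rewrite fdiffN IH ?oppr0.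
by move=> k; rewrite addnS binS natrD opprD addrA subrr add0r.
Qed.

End FiniteDifference.

Lemma symplecticE phi :
  symplectic phi <-> forall N, fdiff N (fun k => phi (N.+1 + k)%N) = 0.
Proof. by split=> [sphi N | sphi [//|N] _]; [apply: (sphi N.+1) | apply: sphi]. Qed.

Notation upow := (fps_pow x2_over_1mx).

Lemma coef0_upowS n : upow n.+1 0%N = 0.
Proof. by rewrite /= /fps_mul big_ord_recl big_ord0 /x2_over_1mx /= mul0r addr0. Qed.

Lemma coef1_upowS n : upow n.+1 1%N = 0.
Proof. by rewrite /= /fps_mul !big_ord_recl big_ord0 /x2_over_1mx /= !mul0r !addr0. Qed.

Lemma coefSS_upowS n j : upow n.+1 j.+2 = \sum_(t < j.+1) upow n t.
Proof.
rewrite /= /fps_mul big_ord_recl [X in _ + X]big_ord_recl /x2_over_1mx /= !mul0r !add0r.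
rewrite (reindex_inj rev_ord_inj); apply: eq_bigr => i _ /=.
by rewrite mul1r; congr fps_pow; rewrite /bump /=; have := ltn_ord i; lia.
Qed.

Lemma sum_shifted_binomial r j :
  \sum_(t < j.+1) (if (2 * r + 2 <= t)%N then ('C(t - r - 2, r))%:R else 0 : C)
  = if (2 * r + 4 <= j + 2)%N then ('C(j - r - 1, r.+1))%:R else 0.
Proof.
elim: j => [|j IH].
  by rewrite big_ord1 !ifF //; apply/negbTE; rewrite -ltnNge /=; lia.
rewrite big_ord_recr /= IH.
have [lt_j1|ge_j1] := ltnP j.+1 (2 * r + 2); first by rewrite !ifF ?addr0 //; lia.
have [lt_j|ge_j] := ltnP j (2 * r + 2).
  have -> : j = (2 * r + 1)%N by lia.
  rewrite ifF; last by apply/negbTE; rewrite -ltnNge; lia.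
  rewrite ifT; last lia.
  have -> : ((2 * r + 1).+1 - r - 1 = r.+1)%N by lia.
  have -> : ((2 * r + 1).+1 - r - 2 = r)%N by lia.
  by rewrite !binn add0r.
rewrite !ifT; try lia.
have -> : (j.+1 - r - 1 = (j - r - 1).+1)%N by lia.
have -> : (j.+1 - r - 2 = j - r - 1)%N by lia.
by rewrite binS natrD.
Qed.

Lemma coef_upowS r j :
  upow r.+1 j = if (2 * r + 2 <= j)%N then ('C(j - r - 2, r))%:R else 0.
Proof.
elim: r j => [|r IH] [|[|j]]; rewrite ?coef0_upowS ?coef1_upowS //.
- rewrite coefSS_upowS big_ord_recl big1 => [|i _]; last by rewrite /= /fps_one.
  by rewrite /= /fps_one /= addr0 subn2 /= bin0.
- by rewrite ifF //; apply/negbTE; rewrite -ltnNge; lia.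
rewrite coefSS_upowS; under eq_bigr => t _ do rewrite IH.
rewrite sum_shifted_binomial.
case: ifP => le_rj; last by rewrite ifF //; apply/negbTE; move/negbT: le_rj; lia.
by rewrite ifT; [congr (_%:R); congr binomial; lia | lia].
Qed.

Lemma coef_upow_small n j : (j < 2 * n)%N -> upow n j = 0.
Proof.
by case: n => [//|r] lt_j; rewrite coef_upowS ifF //; apply/negbTE; rewrite -ltnNge; lia.
Qed.

Lemma coef_upow_diag n : upow n (2 * n)%N = 1.
Proof.
case: n => [//|r]; rewrite coef_upowS ifT; last lia.
have -> : (2 * r.+1 - r - 2 = r)%N by lia.
by rewrite binn.
Qed.

Lemma upow_symplectic n : symplectic (upow n).
Proof.
apply/symplecticE => N; case: n => [|r].
  by rewrite /fdiff big1 // => i _; rewrite /= /fps_one /= mulr0.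
have [lt_rN|le_Nr] := ltnP r N.
  rewrite (@eq_fdiff _ _ _ (fun k => ('C((N - r.+1) + k, r))%:R)) ?fdiff_binomial //.
  move=> k; rewrite coef_upowS.
  case: ifP => le_j; first by congr (_%:R); congr binomial; lia.
  by rewrite bin_small //; move/negbT: le_j; lia.
rewrite /fdiff big1 // => i _; rewrite coef_upow_small ?mulr0 //.
by have := ltn_ord i; lia.
Qed.

Lemma comp_symplectic rho : symplectic (fps_comp rho x2_over_1mx).
Proof.
apply/symplecticE => N; rewrite /fdiff /fps_comp.
have widen (k : 'I_N.+1) :
    \sum_(n < (N.+1 + k).+1) rho n * upow n (N.+1 + k)%N
    = \sum_(n < (N.+1 + N).+1) rho n * upow n (N.+1 + k)%N.
  symmetry; apply: (@sum_ord_trunc _ (fun n => rho n * upow n (N.+1 + k)%N)).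
    by have := ltn_ord k; lia.
  by move=> i /andP[le_i _]; rewrite coef_upow_small ?mulr0 //; lia.
under eq_bigr => k _ do rewrite widen mulr_sumr.
rewrite exchange_big /= big1 // => n _.
transitivity (rho n * fdiff N (fun k => upow n (N.+1 + k)%N)).
  by rewrite /fdiff mulr_sumr; apply: eq_bigr => k _; rewrite mulrCA mulrA.
by move/symplecticE: (upow_symplectic n) => ->; rewrite mulr0.
Qed.

Lemma symplectic_eq_even phi psi : symplectic phi -> symplectic psi ->
  (forall n, phi (2 * n)%N = psi (2 * n)%N) -> phi = psi.
Proof.
move=> /symplecticE sphi /symplecticE spsi eq_even.
apply: functional_extensionality.
suff eq_below M t : (t < M)%N -> phi t = psi t by move=> t; apply: (eq_below t.+1).
elim: M t => [//|M IH] t lt_tM.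
have [|le_Mt] := ltnP t M; first exact: IH.
have {le_Mt lt_tM} -> : t = M by lia.
have := odd_double_half M; case: (odd M) => /= M_half; last first.
  have -> : M = (2 * M./2)%N by lia.
  exact: eq_even.
set N := M./2 in M_half.
have := fdiffB N (fun k => phi (N.+1 + k)%N) (fun k => psi (N.+1 + k)%N).
rewrite sphi spsi subrr /fdiff big_ord_recr /= big1 => [|k _]; last first.
  by rewrite IH ?subrr ?mulr0 //; have := ltn_ord k; lia.
rewrite add0r binn mulr1 => /eqP; rewrite mulf_eq0 signr_eq0 subr_eq0 /=.
have top_index : (N.+1 + N = M)%N by lia.
by rewrite top_index => /eqP.
Qed.

Fixpoint comp_inv_prefix (phi : fps) (n : nat) : nat -> C :=
  if n is n'.+1 then fun j =>
    if j == n' then phi (2 * n')%N - \sum_(i < n') comp_inv_prefix phi n' i * upow i (2 * n')%N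
    else comp_inv_prefix phi n' j
  else fun _ => 0.

Definition comp_inv (phi : fps) : fps := fun j => comp_inv_prefix phi j.+1 j.

Lemma comp_inv_prefixE phi m j : (j < m)%N -> comp_inv_prefix phi m j = comp_inv phi j.
Proof.
elim: m => [//|m IH] lt_jm /=.
case: eqP => [->|ne_jm]; first by rewrite /comp_inv /= eqxx.
by apply: IH; lia.
Qed.

Lemma comp_invE phi n :
  comp_inv phi n = phi (2 * n)%N - \sum_(i < n) comp_inv phi i * upow i (2 * n)%N.
Proof.
rewrite /comp_inv /= eqxx; congr (_ - _); apply: eq_bigr => i _.
by rewrite comp_inv_prefixE.
Qed.

Lemma comp_inv_even phi n :
  fps_comp (comp_inv phi) x2_over_1mx (2 * n)%N = phi (2 * n)%N.
Proof.
rewrite /fps_comp (@sum_ord_trunc _ (fun i => comp_inv phi i * upow i (2 * n)%N) n.+1).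
- by rewrite big_ord_recr /= coef_upow_diag mulr1 [comp_inv phi n]comp_invE addrC subrK.
- by lia.
by move=> i /andP[le_i _]; rewrite coef_upow_small ?mulr0 //; lia.
Qed.

Theorem proposition1p4 (phi : fps) :
  symplectic phi <-> exists rho : fps, phi = fps_comp rho x2_over_1mx.
Proof.
split=> [sphi | [rho ->]]; last exact: comp_symplectic.
exists (comp_inv phi); apply: symplectic_eq_even => //; first exact: comp_symplectic.
by move=> n; rewrite comp_inv_even.
Qed.
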